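(* Let $p>1$ and let $A$ be a complex $r$-matrix of order $n_1\times\cdots\times n_r$. Then for every $k\in[r]$, \[ \|A\|_p\geq\left(\frac{n_k^{1/(p-1)}}{(n_1\cdots n_r)^{1/(p-1)}}\sum_{j\in[n_k]}\big|\Sigma A^{(k)}_j\big|^{p/(p-1)}\right)^{(p-1)/p}. \]
   Context: An $r$-matrix of order $n_1\times\cdots\times n_r$ is a function on $[n_1]\times\cdots\times[n_r]$ with values $a_{i_1,\ldots,i_r}$. For $k\in[r]$, $j\in[n_k]$, the slice $A^{(k)}_j$ is the $(r-1)$-matrix obtained by fixing $i_k=j$, and $\Sigma A^{(k)}_j$ is the sum of its entries. The spectral $p$-norm is $\|A\|_p=\max\{|\sum a_{i_1,\ldots,i_r}\overline{x^{(1)}_{i_1}}\cdots\overline{x^{(r)}_{i_r}}|:\mathbf{x}^{(k)}\in\mathbb{C}^{n_k},\ |\mathbf{x}^{(k)}|_p=1\ \forall k\}$. *)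

From mathcomp Require Import all_boot all_algebra.
From mathcomp Require Import all_classical all_reals all_analysis.
From mathcomp Require Import complex.
Import GRing.Theory Num.Theory.
Local Open Scope ring_scope.
Local Open Scope classical_set_scope.

Set Implicit Arguments. Unset Strict Implicit. Unset Printing Implicit Defensive.

Definition cmod {R : realType} (z : R[i]) : R :=
  Num.sqrt (complex.Re z ^+ 2 + complex.Im z ^+ 2).

(* Multi-indices of an r-matrix of order n_1 x ... x n_r:
   (i_1,...,i_r) with i_k in [n_k]  (0-based ordinals). *)
Definition mindex (r : nat) (n : 'I_r -> nat) : finType :=
  {dffun forall k : 'I_r, 'I_(n k)}.

Definition rmatrix (R : realType) (r : nat) (n : 'I_r -> nat) : Type :=
  mindex n -> R[i].

Definition vnorm_p {R : realType} (p : R) (m : nat) (x : 'I_m -> R[i]) : R :=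
  (\sum_(i < m) cmod (x i) `^ p) `^ (p^-1).

Definition mform {R : realType} (r : nat) (n : 'I_r -> nat) (A : rmatrix R n)
  (x : forall k : 'I_r, 'I_(n k) -> R[i]) : R[i] :=
  \sum_(i : mindex n) A i * \prod_(k < r) conjc (x k (i k)).

(* Spectral p-norm: the maximum (taken as supremum; the set is compact so the
   max is attained) of |form| over x^(k) with |x^(k)|_p = 1 for all k. *)
Definition spec_norm {R : realType} (p : R) (r : nat) (n : 'I_r -> nat)
  (A : rmatrix R n) : R :=
  sup [set cmod (mform A x) | x in
        [set x : forall k : 'I_r, 'I_(n k) -> R[i] | forall k, vnorm_p p (x k) = 1]].

Definition slice_sum {R : realType} (r : nat) (n : 'I_r -> nat) (A : rmatrix R n)
  (k : 'I_r) (j : 'I_(n k)) : R[i] :=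
  \sum_(i : mindex n | i k == j) A i.

(* Fixing every factor except the k-th to the flat unit vector
   n_l^(-1/p) (1, ..., 1) collapses the multilinear form to
   (prod_(l <> k) n_l)^(-1/p) * sum_j s_j conj(x_j), where s_j is the sum of the
   slice A^(k)_j.  Taking for x the Hoelder dual of s, i.e.
   x_j = s_j |s_j|^(q-2) / |s|_q^(q/p) with q = p/(p-1), makes this sum equal to
   |s|_q, and the right-hand side of the theorem simplifies to exactly
   (prod_(l <> k) n_l)^(-1/p) |s|_q. *)

From mathcomp Require Import all_boot all_algebra.
From mathcomp Require Import all_classical all_reals all_analysis.
From mathcomp Require Import complex.
From mathcomp Require Import ring.

Set Implicit Arguments.
Unset Strict Implicit.
Unset Printing Implicit Defensive.

Import order.Order.TTheory GRing.Theory Num.Theory.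
Local Open Scope ring_scope.
Local Open Scope complex_scope.

Section ComplexModulus.
Variable R : realType.
Implicit Types z w : R[i].

Lemma cmodE z : `|z| = (cmod z)%:C.
Proof. by rewrite normc_def. Qed.

Lemma cmod_ge0 z : 0 <= cmod z.
Proof. exact: sqrtr_ge0. Qed.

Lemma cmodM z w : cmod (z * w) = cmod z * cmod w.
Proof. by apply: complexI; rewrite rmorphM /= -!cmodE normrM. Qed.

Lemma cmodR (a : R) : cmod a%:C = `|a|.
Proof. by rewrite /cmod /= expr0n addr0 sqrtr_sqr. Qed.

Lemma cmodJ z : cmod (conjc z) = cmod z.
Proof. by case: z => a b; rewrite /cmod /= sqrrN. Qed.

Lemma conjcMr z (a : R) : conjc (z * a%:C) = conjc z * a%:C.
Proof. by rewrite rmorphM; congr (_ * _); exact: conjc_real. Qed.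

Lemma mulcJ_cmod z : z * conjc z = (cmod z ^+ 2)%:C.
Proof. by rewrite -sqr_normc cmodE rmorphXn. Qed.

Lemma ler_cmod_sum (I : Type) (s : seq I) (P : pred I) (F : I -> R[i]) :
  cmod (\sum_(i <- s | P i) F i) <= \sum_(i <- s | P i) cmod (F i).
Proof.
rewrite -lecR rmorph_sum -cmodE (le_trans (ler_norm_sum _ _ _)) //.
by under eq_bigr do rewrite cmodE.
Qed.

Lemma cmod_prod (I : Type) (s : seq I) (P : pred I) (F : I -> R[i]) :
  cmod (\prod_(i <- s | P i) F i) = \prod_(i <- s | P i) cmod (F i).
Proof.
apply: complexI; rewrite rmorph_prod -cmodE normr_prod.
by under eq_bigr do rewrite cmodE.
Qed.

End ComplexModulus.

Section PowR.
Variable R : realType.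

Lemma powR_prod (I : Type) (s : seq I) (P : pred I) (F : I -> R) (a : R) :
  (forall i, P i -> 0 <= F i) ->
  \prod_(i <- s | P i) F i `^ a = (\prod_(i <- s | P i) F i) `^ a.
Proof.
move=> F_ge0; elim: s => [|x s IHs]; first by rewrite !big_nil powR1.
rewrite !big_cons; case: ifP => // Px.
by rewrite IHs powRM ?F_ge0 // prodr_ge0.
Qed.

Lemma powR_ratio_mul (a b t c d : R) : 0 < a -> 0 <= b -> 0 <= t ->
  (a `^ c / (a * b) `^ c * t) `^ d = b `^ (- (c * d)) * t `^ d.
Proof.
move=> a_gt0 b_ge0 t_ge0.
rewrite (powRM c (ltW a_gt0) b_ge0) invfM mulrA.
rewrite mulfV ?(gt_eqF (powR_gt0 c a_gt0)) // mul1r -powRN.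
by rewrite powRM ?powR_ge0 // -powRrM mulNr.
Qed.

End PowR.

Section UnitVectors.
Variables (R : realType) (p : R).
Hypothesis p_gt0 : 0 < p.

Lemma vnorm_p_eq1_cmod_le1 (m : nat) (x : 'I_m -> R[i]) (j : 'I_m) :
  vnorm_p p x = 1 -> cmod (x j) <= 1.
Proof.
have p_neq0 : p != 0 by rewrite gt_eqF.
rewrite /vnorm_p => x_unit.
have sum_eq1 : \sum_(i < m) cmod (x i) `^ p = 1.
  have sum_ge0 : 0 <= \sum_(i < m) cmod (x i) `^ p.
    by apply: sumr_ge0 => i _; exact: powR_ge0.
  by rewrite -(powRr1 sum_ge0) -[X in _ `^ X](mulVf p_neq0) powRrM x_unit powR1.
have xj_le1 : cmod (x j) `^ p <= 1.
  rewrite -sum_eq1 (bigD1 j) //= lerDl.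
  by apply: sumr_ge0 => i _; exact: powR_ge0.
have pV_ge0 : 0 <= p^-1 by rewrite invr_ge0 ltW.
have := ge0_ler_powR pV_ge0 (powR_ge0 _ _) ler01 xj_le1.
by rewrite powR1 -powRrM mulfV // powRr1 ?cmod_ge0.
Qed.

Lemma vnorm_p_flat (m : nat) : (0 < m)%N ->
  vnorm_p p (fun _ : 'I_m => (m%:R `^ (- p^-1))%:C) = 1.
Proof.
move=> m_gt0; rewrite /vnorm_p.
under eq_bigr do rewrite cmodR ger0_norm ?powR_ge0 // -powRrM mulNr mulVf ?gt_eqF //.
rewrite sumr_const card_ord powR_inv1 ?ler0n // -(mulr_natr m%:R^-1).
by rewrite mulVf ?pnatr_eq0 -?lt0n // powR1.
Qed.

End UnitVectors.

Section SpectralNorm.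
Variables (R : realType) (p : R) (r : nat) (n : 'I_r -> nat) (A : rmatrix R n).
Hypothesis p_gt0 : 0 < p.

Lemma mform_le_spec_norm (x : forall l : 'I_r, 'I_(n l) -> R[i]) :
  (forall l, vnorm_p p (x l) = 1) -> cmod (mform A x) <= spec_norm p A.
Proof.
move=> x_unit; apply: ub_le_sup; last by exists x.
exists (\sum_i cmod (A i)) => _ [y y_unit <-].
rewrite /mform; apply: le_trans; first exact: ler_cmod_sum.
apply: ler_sum => i _; rewrite cmodM cmod_prod ler_piMr ?cmod_ge0 //.
apply: prodr_ile1 => l _; rewrite cmod_ge0 cmodJ /=.
exact: vnorm_p_eq1_cmod_le1 (y_unit l).
Qed.

Lemma mform_const_except (k : 'I_r) (x : forall l : 'I_r, 'I_(n l) -> R[i])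
    (a : 'I_r -> R) :
  (forall l, l != k -> forall m, x l m = (a l)%:C) ->
  mform A x = (\prod_(l | l != k) a l)%:C * \sum_j slice_sum A j * conjc (x k j).
Proof.
move=> x_const; rewrite mulr_sumr /mform.
rewrite (partition_big (fun i : mindex n => i k) xpredT) //=.
apply: eq_bigr => j _; rewrite /slice_sum big_distrl big_distrr /=.
apply: eq_bigr => i /eqP <-; rewrite (bigD1 k) //=.
have -> : \prod_(l | l != k) conjc (x l (i l)) = (\prod_(l | l != k) a l)%:C.
  by rewrite rmorph_prod; apply: eq_bigr => l /x_const ->; exact: conjc_real.
by rewrite [RHS]mulrC mulrA.
Qed.

Hypothesis n_gt0 : forall l, (0 < n l)%N.

Let flat l (m : 'I_(n l)) : R[i] := ((n l)%:R `^ (- p^-1))%:C.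

Lemma spec_norm_ge0 : 0 <= spec_norm p A.
Proof.
apply: le_trans (cmod_ge0 (mform A flat)) _.
by apply: mform_le_spec_norm => l; exact: vnorm_p_flat.
Qed.

Lemma spec_norm_ge_slice_form (k : 'I_r) (y : 'I_(n k) -> R[i]) :
  vnorm_p p y = 1 ->
  (\prod_(l | l != k) ((n l)%:R : R)) `^ (- p^-1) *
    cmod (\sum_j slice_sum A j * conjc (y j)) <= spec_norm p A.
Proof.
move=> y_unit.
pose j0 : 'I_(n k) := Ordinal (n_gt0 k).
pose x l (m : 'I_(n l)) := if l == k then y (insubd j0 (val m)) else flat m.
have x_const l : l != k -> forall m, x l m = ((n l)%:R `^ (- p^-1))%:C.
  by move=> /negbTE l_neq_k m; rewrite /x l_neq_k.
have x_k : x k = y by apply: funext => j; rewrite /x eqxx valKd.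
apply: le_trans (@mform_le_spec_norm x _); last first.
  move=> l; have [->|l_neq_k] := eqVneq l k; first by rewrite x_k.
  rewrite -(vnorm_p_flat p_gt0 (n_gt0 l)); congr vnorm_p.
  by apply: funext; exact: x_const.
rewrite (mform_const_except x_const) x_k cmodM cmodR ger0_norm; last first.
  by apply: prodr_ge0 => l _; exact: powR_ge0.
by rewrite powR_prod // => l _; exact: ler0n.
Qed.

End SpectralNorm.

Definition holder_dual (R : realType) (p : R) (m : nat) (s : 'I_m -> R[i]) :
    'I_m -> R[i] :=
  fun j => s j * (cmod (s j) `^ ((p - 1)^-1 - 1) /
                  (\sum_(i < m) cmod (s i) `^ (p / (p - 1))) `^ p^-1)%:C.

Section HolderDual.
Variables (R : realType) (p : R) (m : nat) (s : 'I_m -> R[i]).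
Hypothesis p_gt1 : 1 < p.

Let e := (p - 1)^-1.
Let S := \sum_(i < m) cmod (s i) `^ (p / (p - 1)).

Let e_gt0 : 0 < e.
Proof. by rewrite invr_gt0 subr_gt0. Qed.

Let p_neq0 : p != 0.
Proof. by rewrite gt_eqF // (lt_trans ltr01). Qed.

Let S_ge0 : 0 <= S.
Proof. by apply: sumr_ge0 => i _; exact: powR_ge0. Qed.

Lemma cmod_holder_dual j : cmod (holder_dual p s j) = cmod (s j) `^ e / S `^ p^-1.
Proof.
rewrite cmodM cmodR ger0_norm ?divr_ge0 ?powR_ge0 //.
by rewrite mulrA mulr_powRB1 ?cmod_ge0.
Qed.

Lemma vnorm_p_holder_dual : S != 0 -> vnorm_p p (holder_dual p s) = 1.
Proof.
move=> S_neq0; rewrite /vnorm_p.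
under eq_bigr do rewrite cmod_holder_dual -powRN powRM ?powR_ge0 // -!powRrM
  mulNr mulVf // powR_inv1 // [e * p]mulrC.
by rewrite -mulr_suml mulfV // powR1.
Qed.

Lemma sum_mul_holder_dual :
  \sum_j s j * conjc (holder_dual p s j) = (S `^ ((p - 1) / p))%:C.
Proof.
have q_eq : p / (p - 1) = e + 1.
  by rewrite /e; field; rewrite subr_eq0 gt_eqF.
have -> : (p - 1) / p = 1 - p^-1 by field.
rewrite powRB ?powRr1 //; last by rewrite eq_sym invr_eq1 gt_eqF.
rewrite mulr_suml rmorph_sum; apply: eq_bigr => j _.
rewrite /holder_dual conjcMr mulrA mulcJ_cmod -rmorphM; congr (_%:C).
set u := cmod (s j); have u_ge0 : 0 <= u by exact: cmod_ge0.
have u_pow : u * u * u `^ (e - 1) = u `^ (p / (p - 1)).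
  rewrite -mulrA mulr_powRB1 // q_eq.
  by rewrite -[in RHS](mulr_powRB1 u_ge0 (addr_gt0 e_gt0 ltr01)) addrK.
by rewrite mulrA expr2 u_pow.
Qed.

End HolderDual.

Theorem theorem23 (R : realType) (p : R) (r : nat) (n : 'I_r -> nat)
  (A : rmatrix R n) (hp : 1 < p) (hn : forall k, (0 < n k)%N) (k : 'I_r) :
  spec_norm p A >=
  ((((n k)%:R : R) `^ ((p - 1)^-1) / (\prod_(l < r) ((n l)%:R : R)) `^ ((p - 1)^-1))
     * \sum_(j < n k) cmod (slice_sum A j) `^ (p / (p - 1))) `^ ((p - 1) / p).
Proof.
have p_gt0 : 0 < p := lt_trans ltr01 hp.
have p1_gt0 : 0 < p - 1 by rewrite subr_gt0.
have [S_eq0|S_neq0] := eqVneq (\sum_(j < n k) cmod (slice_sum A j) `^ (p / (p - 1))) 0.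
  rewrite S_eq0 mulr0 powR0 ?spec_norm_ge0 //.
  by rewrite mulf_neq0 ?invr_eq0 ?gt_eqF.
have S_ge0 : 0 <= \sum_(j < n k) cmod (slice_sum A j) `^ (p / (p - 1)).
  by apply: sumr_ge0 => j _; exact: powR_ge0.
rewrite (bigD1 k) //= powR_ratio_mul ?ltr0n ?prodr_ge0 //.
have -> : - ((p - 1)^-1 * ((p - 1) / p)) = - p^-1.
  by field; rewrite !gt_eqF.
apply: le_trans (spec_norm_ge_slice_form A p_gt0 hn (vnorm_p_holder_dual hp S_neq0)).
by rewrite sum_mul_holder_dual // cmodR ger0_norm ?powR_ge0.
Qed.
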